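(* Let $\beta>1$ be an Ito-Sadahiro number, with $d_{-\beta}(l_\beta)=d_1\cdots d_m\,(d_{m+1}\cdots d_{m+p})^\omega$, where $m\ge0$, $p\ge1$ are minimal such that $d_{-\beta}(l_\beta)$ can be written in this form, and let $$P(x)=(-x)^{m+1}\sum_{i=0}^{p-1}(-x)^i+\big((-x)^p-1\big)\sum_{i=1}^m d_i(-x)^{m-i}+\sum_{i=m+1}^{m+p}d_i(-x)^{m+p-i}$$ be its Ito-Sadahiro polynomial. Then every complex root $\gamma\neq\beta$ of $P$ satisfies $|\gamma|<2$. In particular, every algebraic conjugate $\gamma\ne\beta$ of $\beta$ satisfies $|\gamma|<2$.
   Context: For $\beta>1$ put $l_\beta=-\frac{\beta}{\beta+1}$, $r_\beta=\frac{1}{\beta+1}$ and $I_\beta=[l_\beta,r_\beta)$. Define $T:I_\beta\to I_\beta$ by $T(x)=-\beta x-\lfloor -\beta x-l_\beta\rfloor$. The $(-\beta)$-expansion of $x\in I_\beta$ is the infinite word $d_{-\beta}(x)=x_1x_2x_3\cdots$ with $x_i=\lfloor -\beta T^{i-1}(x)-l_\beta\rfloor$ for $i\ge1$; then $x=\sum_{i\ge1}x_i(-\beta)^{-i}$. The notation $w^\omega$ denotes infinite repetition of the finite word $w$. A number $\beta>1$ is an Ito-Sadahiro number if $d_{-\beta}(l_\beta)$ is eventually periodic. *)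

From HB Require Import structures.
From mathcomp Require Import all_boot all_order all_algebra.
From mathcomp Require Import reals.
From mathcomp Require Export complex.
Set Implicit Arguments. Unset Strict Implicit. Unset Printing Implicit Defensive.
Import Order.TTheory GRing.Theory Num.Theory.
Local Open Scope ring_scope.

Section NegBeta.
Variable R : realType.

Definition lbeta (b : R) : R := - b / (b + 1).
Definition rbeta (b : R) : R := 1 / (b + 1).

Definition nbdigit (b x : R) : int := Num.floor (- b * x - lbeta b).

Definition nbT (b x : R) : R := - b * x - (nbdigit b x)%:~R.

(* d_{-beta}(x), 0-indexed: nbexp b x i = x_{i+1} = digit of T^i(x) *)
Definition nbexp (b x : R) (i : nat) : int := nbdigit b (iter i (nbT b) x).

(* the infinite word d is of the form d_1..d_m (d_{m+1}..d_{m+p})^omega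
   (0-indexed: d (k+p) = d k for all k >= m) *)
Definition preperiodic_form (d : nat -> int) (m p : nat) : Prop :=
  (1 <= p)%N /\ forall k, (m <= k)%N -> d (k + p)%N = d k.

Definition ito_sadahiro (b : R) : Prop :=
  1 < b /\ exists m p, preperiodic_form (nbexp b (lbeta b)) m p.

Definition minimal_form (d : nat -> int) (m p : nat) : Prop :=
  preperiodic_form d m p /\
  forall m' p', preperiodic_form d m' p' -> (m <= m')%N /\ (p <= p')%N.

(* The Ito-Sadahiro polynomial, with integer coefficients
   (d i denotes d_{i+1}) :
   (-x)^(m+1) sum_{i=0}^{p-1} (-x)^i
   + ((-x)^p - 1) sum_{i=1}^m d_i (-x)^(m-i)
   + sum_{i=m+1}^{m+p} d_i (-x)^(m+p-i) *)
Definition IS_poly (d : nat -> int) (m p : nat) : {poly int} :=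
  (- 'X) ^+ m.+1 * \sum_(0 <= i < p) (- 'X) ^+ i
  + ((- 'X) ^+ p - 1) * \sum_(1 <= i < m.+1) (d i.-1)%:P * (- 'X) ^+ (m - i)
  + \sum_(m.+1 <= i < (m + p).+1) (d i.-1)%:P * (- 'X) ^+ (m + p - i).

End NegBeta.

From HB Require Import structures.
From mathcomp Require Import all_boot all_order all_algebra.
From mathcomp Require Import reals complex.
From mathcomp Require Import ring lra zify.
Set Implicit Arguments. Unset Strict Implicit. Unset Printing Implicit Defensive.
Import Order.TTheory GRing.Theory Num.Theory.
Local Open Scope ring_scope.

(* Put y = -g and let t_n = T^n(l_beta) be the orbit of l_beta, so that
   t_(n+1) = -beta t_n - d_n.  With V_0 = 1 and V_(n+1) = y V_n - (t_(n+1) - t_n)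
   one finds (y - 1) P(g) = (beta + 1)(t_(m+p) - t_m) + (y + beta)(V_(m+p) - V_m).
   Since T expands distances by beta and the orbit stays in an interval of length 1,
   periodic digits force t_(m+p) = t_m; hence P(beta) = 0, and every other root has
   V_(m+p) = V_m.  But |t_(n+1) - t_n| < 1, so for |y| >= 2 the moduli |V_n| are
   strictly increasing, a contradiction.  Conjugates of beta are roots of P because
   the minimal polynomial of beta divides P. *)

Section OrbitHorner.
Variables (A : comNzRingType) (b y : A) (t d : nat -> A).

Fixpoint digit_horner n := if n is n'.+1 then y * digit_horner n' + d n' else 0.

Fixpoint orbit_horner n :=
  if n is n'.+1 then y * orbit_horner n' - (t n'.+1 - t n') else 1.

Lemma digit_horner_shift M n :
  \sum_(M.+1 <= i < (M + n).+1) d i.-1 * y ^+ (M + n - i)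
  = digit_horner (M + n) - y ^+ n * digit_horner M.
Proof.
elim: n => [|n IH]; first by rewrite addn0 big_geq // expr0 mul1r subrr.
rewrite big_nat_recr /=; last by lia.
rewrite addnS subnn expr0 mulr1.
rewrite (eq_big_nat _ _ (F2 := fun i => y * (d i.-1 * y ^+ (M + n - i)))); last first.
  move=> i /andP[_ hi]; rewrite subSn; last by lia.
  by rewrite exprS mulrCA.
by rewrite -mulr_sumr IH /= exprS; ring.
Qed.

Hypotheses (orbit0 : (b + 1) * t 0 = - b)
  (orbitS : forall n, t n.+1 = - b * t n - d n).

Lemma digit_hornerE n :
  (y - 1) * digit_horner n = (b + 1) * t n + (y + b) * orbit_horner n - y ^+ n.+1.
Proof.
elim: n => [|n IH] /=; first by rewrite mulr0 orbit0 expr1; ring.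
have -> : (y - 1) * (y * digit_horner n + d n)
  = y * ((y - 1) * digit_horner n) + (y - 1) * d n by ring.
by rewrite IH orbitS !exprS; ring.
Qed.

Lemma IS_sum_identity m p :
  (y - 1) * (y ^+ m.+1 * \sum_(0 <= i < p) y ^+ i
    + (y ^+ p - 1) * \sum_(1 <= i < m.+1) d i.-1 * y ^+ (m - i)
    + \sum_(m.+1 <= i < (m + p).+1) d i.-1 * y ^+ (m + p - i))
  = (b + 1) * (t (m + p) - t m) + (y + b) * (orbit_horner (m + p) - orbit_horner m).
Proof.
have := digit_horner_shift 0 m; rewrite add0n /= mulr0 subr0 => ->.
rewrite digit_horner_shift.
have geom : (y - 1) * \sum_(0 <= i < p) y ^+ i = y ^+ p - 1 by rewrite big_mkord subrX1.
have -> : forall S D1 D2 : A,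
    (y - 1) * (y ^+ m.+1 * S + (y ^+ p - 1) * D1 + (D2 - y ^+ p * D1))
    = y ^+ m.+1 * ((y - 1) * S) + (y - 1) * D2 - (y - 1) * D1 by move=> *; ring.
rewrite geom !digit_hornerE exprS !exprSr exprD; ring.
Qed.

End OrbitHorner.

Lemma horner_IS_poly (A : comNzRingType) (d : nat -> int) m p (g : A) :
  (map_poly (fun z : int => z%:~R) (IS_poly d m p)).[g] =
  (- g) ^+ m.+1 * \sum_(0 <= i < p) (- g) ^+ i
  + ((- g) ^+ p - 1) * \sum_(1 <= i < m.+1) (d i.-1)%:~R * (- g) ^+ (m - i)
  + \sum_(m.+1 <= i < (m + p).+1) (d i.-1)%:~R * (- g) ^+ (m + p - i).
Proof.
have powE k : (map_poly (fun z : int => z%:~R : A) ((- 'X) ^+ k)).[g] = (- g) ^+ k.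
  by rewrite rmorphXn rmorphN /= map_polyX hornerE hornerN hornerX.
have termE (c : int) k :
    (map_poly (fun z : int => z%:~R : A) (c%:P * (- 'X) ^+ k)).[g] = c%:~R * (- g) ^+ k.
  by rewrite rmorphM /= map_polyC hornerM powE hornerC.
rewrite /IS_poly !rmorphD !rmorphM /= !rmorph_sum /= !hornerE !horner_sum.
rewrite rmorphB rmorph1 /= hornerD hornerN hornerC !powE.
by congr (_ * _ + _ * _ + _); apply: eq_bigr => i _; rewrite ?termE ?powE.
Qed.

Lemma norm_lt_mulB (C : numDomainType) (y v c : C) :
  2 <= `|y| -> `|c| < 1 -> 1 <= `|v| -> `|v| < `|y * v - c|.
Proof.
move=> y_ge2 c_lt1 v_ge1; apply: lt_le_trans (lerB_dist _ _).
rewrite normrM ltrBrDr; apply: lt_le_trans (_ : `|v| *+ 2 <= _).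
  by rewrite mulr2n ltrD2l (lt_le_trans c_lt1).
by rewrite -mulr_natl ler_wpM2r.
Qed.

Lemma norm_recurrence_increasing (C : numDomainType) (y : C) (v c : nat -> C) :
  2 <= `|y| -> (forall n, `|c n| < 1) -> 1 <= `|v 0| ->
  (forall n, v n.+1 = y * v n - c n) ->
  {homo (fun n => `|v n|) : i j / (i < j)%N >-> i < j}.
Proof.
move=> y_ge2 c_lt1 v0_ge1 vS.
have v_ge1 n : 1 <= `|v n|.
  elim: n => // n IH; rewrite vS.
  exact/(le_trans IH)/ltW/norm_lt_mulB.
by apply: homo_ltn lt_trans _ => n; rewrite vS norm_lt_mulB.
Qed.

Lemma bernoulli_ineq (F : numDomainType) (h : F) (k : nat) :
  0 <= h -> 1 + h *+ k <= (1 + h) ^+ k.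
Proof.
move=> h_ge0; elim: k => [|k IH]; first by rewrite mulr0n addr0 expr0.
rewrite exprSr; apply: le_trans (ler_wpM2r (addr_ge0 ler01 h_ge0) IH).
rewrite mulrDl mul1r mulrSr mulrDr mulr1 -addrA lerD2l [_ + h]addrC lerD2l lerDl.
by rewrite mulr_ge0 ?mulrn_wge0.
Qed.

Lemma eq0_of_geometric_bounded (F : archiRealFieldType) (b e : F) :
  1 < b -> (forall k, `|e| * b ^+ k < 1) -> e = 0.
Proof.
move=> b_gt1 bounded; apply/eqP.
apply: contraTT (bounded (Num.bound (`|e| * (b - 1))^-1)).
rewrite -normr_gt0 -leNgt => e_gt0.
have h_gt0 : 0 < `|e| * (b - 1) by rewrite mulr_gt0 // subr_gt0.
set k := Num.bound _.
have k_gt : (`|e| * (b - 1))^-1 < k%:R by apply: archi_boundP; rewrite invr_ge0 ltW.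
have := @bernoulli_ineq _ (b - 1) k.
rewrite subr_ge0 [1 + (b - 1)]addrC subrK => /(_ (ltW b_gt1)) bern.
apply: le_trans (ler_wpM2l (ltW e_gt0) bern).
rewrite mulrDr mulr1 mulrnAr -mulr_natr ler_wpDl ?ltW //.
by move: k_gt; rewrite -[X in X < _]mulr1 ltr_pdivrMl // => /ltW.
Qed.

Section Orbit.
Variables (R : realType) (b : R).
Hypothesis b_gt1 : 1 < b.

Definition orbit n := iter n (nbT b) (lbeta b).

Local Notation digit := (nbexp b (lbeta b)).

Lemma orbitS n : orbit n.+1 = - b * orbit n - (digit n)%:~R.
Proof. by rewrite /orbit iterS /nbT /nbexp. Qed.

Lemma orbit0 : (b + 1) * orbit 0 = - b.
Proof.
by rewrite /orbit /= /lbeta mulrC divfK // gt_eqF // addr_gt0 // (lt_trans ltr01).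
Qed.

Lemma orbit_bounds n : lbeta b <= orbit n < lbeta b + 1.
Proof.
case: n => [|n]; first by rewrite lexx ltrDl ltr01.
rewrite /orbit iterS /nbT /nbdigit.
set v := - b * _ - lbeta b.
have := floor_le v; have := floorD1_gt v; rewrite intrD /v => ? ?.
apply/andP; split; lra.
Qed.

Lemma orbit_dist i j : `|orbit i - orbit j| < 1.
Proof.
have := orbit_bounds i; have := orbit_bounds j => /andP[? ?] /andP[? ?].
rewrite ltr_norml; apply/andP; split; lra.
Qed.

Lemma orbit_periodic m p :
  preperiodic_form digit m p -> orbit (m + p) = orbit m.
Proof.
move=> [_ dper]; apply/eqP; rewrite -subr_eq0; apply/eqP.
have scaled k :
    orbit (m + k + p) - orbit (m + k) = (- b) ^+ k * (orbit (m + p) - orbit m).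
  elim: k => [|k IH]; first by rewrite addn0 expr0 mul1r.
  rewrite addnS (addSn (m + k)) !orbitS dper ?leq_addr // exprS -mulrA -IH; ring.
apply: eq0_of_geometric_bounded b_gt1 _ => k.
have := orbit_dist (m + k + p) (m + k).
by rewrite scaled normrM normrX normrN (gtr0_norm (lt_trans ltr01 b_gt1)) mulrC.
Qed.

End Orbit.

Lemma norm_real_complex (R : rcfType) (x : R) : `|(x%:C)%C| = (`|x|%:C)%C.
Proof. by rewrite normc_def /= expr0n addr0 sqrtr_sqr. Qed.

Section IsPolynomial.
Variables (R : realType) (b : R).
Hypothesis b_gt1 : 1 < b.

Local Notation digit := (nbexp b (lbeta b)).
Local Notation P m p := (map_poly (fun z : int => z%:~R) (IS_poly digit m p)).
Local Notation orbitC n := ((orbit b n)%:C)%C.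
Local Notation bC := ((b%:C)%C : R[i]).

Lemma orbitC0 : (bC + 1) * orbitC 0 = - bC.
Proof.
by rewrite -(rmorph1 (real_complex R)) -rmorphD -rmorphM orbit0 // rmorphN.
Qed.

Lemma orbitCS n : orbitC n.+1 = - bC * orbitC n - (digit n)%:~R.
Proof. by rewrite orbitS rmorphB rmorphM rmorphN rmorph_int. Qed.

Lemma IS_poly_identity m p (g : R[i]) : preperiodic_form digit m p ->
  (- g - 1) * (P m p).[g]
  = (- g + bC) * (orbit_horner (- g) (fun n => orbitC n) (m + p)
                  - orbit_horner (- g) (fun n => orbitC n) m).
Proof.
move=> per; rewrite horner_IS_poly.
by rewrite (IS_sum_identity _ orbitC0 orbitCS) orbit_periodic // subrr mulr0 add0r.
Qed.

Lemma IS_poly_root_beta m p : preperiodic_form digit m p -> root (P m p) bC.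
Proof.
move=> per; apply/rootP.
have b1_neq0 : bC + 1 != 0.
  rewrite -(rmorph1 (real_complex R)) -rmorphD fmorph_eq0.
  by rewrite gt_eqF // addr_gt0 // (lt_trans ltr01).
have := IS_poly_identity bC per; rewrite addNr mul0r => /eqP.
by rewrite mulf_eq0 -opprD oppr_eq0 (negPf b1_neq0) => /eqP.
Qed.

Lemma IS_poly_roots_lt2 m p (g : R[i]) : preperiodic_form digit m p ->
  root (P m p) g -> g != bC -> `|g| < 2.
Proof.
move=> per /rootP root_g g_neq_b.
rewrite real_ltNge ?realn ?normr_real //; apply/negP => g_ge2.
have orbit_step n : `|orbitC n.+1 - orbitC n| < 1.
  by rewrite -rmorphB norm_real_complex -(rmorph1 (real_complex R)) ltcR orbit_dist.
have y_ge2 : 2 <= `|- g| by rewrite normrN.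
have v0_ge1 : 1 <= `|orbit_horner (- g) (fun n => orbitC n) 0| by rewrite normr1.
have incr := norm_recurrence_increasing (v := orbit_horner (- g) (fun n => orbitC n))
  y_ge2 orbit_step v0_ge1 (fun n => erefl).
have := IS_poly_identity g per; rewrite root_g mulr0 => /esym/eqP.
rewrite mulf_eq0 addrC subr_eq0 eq_sym (negPf g_neq_b) subr_eq0 => /eqP eq_hor.
have [p_ge1 _] := per.
have /incr : (m < m + p)%N by lia.
by rewrite eq_hor ltxx.
Qed.

Lemma IS_poly_conjugates_lt2 m p (q : {poly rat}) (g : R[i]) :
  preperiodic_form digit m p -> irreducible_poly q ->
  root (map_poly ratr q) bC -> root (map_poly ratr q) g -> g != bC -> `|g| < 2.
Proof.
move=> per q_irr q_b q_g g_neq_b.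
pose Pq : {poly rat} := map_poly intr (IS_poly digit m p).
have Pq_ratr : map_poly (ratr : rat -> R[i]) Pq = P m p.
  by rewrite /Pq -map_poly_comp; apply: eq_map_poly => z /=; exact: ratr_int.
have q_dvd : q %| Pq.
  apply/negPn; rewrite -irreducible_poly_coprime //; apply/negP => q_coprime.
  rewrite -(coprimep_map (ratr : {rmorphism rat -> R[i]})) in q_coprime.
  move: (coprimep_root q_coprime q_b).
  by rewrite Pq_ratr (rootP (IS_poly_root_beta per)) eqxx.
apply: IS_poly_roots_lt2 per _ g_neq_b.
by rewrite -Pq_ratr (root_dvdp _ q_g) ?dvdp_map.
Qed.

End IsPolynomial.

Theorem theorem1 (R : realType) (b : R) (m p : nat) :
  ito_sadahiro b ->
  minimal_form (nbexp b (lbeta b)) m p ->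
  (forall g : R[i],
      root (map_poly (fun z : int => z%:~R) (IS_poly (nbexp b (lbeta b)) m p)) g ->
      g != (b%:C)%C -> `|g| < 2) /\
  (forall (q : {poly rat}) (g : R[i]),
      irreducible_poly q ->
      root (map_poly (fun z : rat => ratr z) q) (b%:C)%C ->
      root (map_poly (fun z : rat => ratr z) q) g ->
      g != (b%:C)%C -> `|g| < 2).
Proof.
move=> [b_gt1 _] [per _]; split => [g | q g].
  exact (IS_poly_roots_lt2 b_gt1 per).
exact (IS_poly_conjugates_lt2 b_gt1 per).
Qed.
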